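(* Let $N\in\mathbb N$ and let $a=(a_0,a_1,\dots,a_N)\in\mathbb N^{N+1}$ satisfy $a_0\le a_1\le\dots\le a_N$, $a_0<a_2<a_4<\cdots$, $a_1<a_3<a_5<\cdots$, and suppose the set $\mathcal J=\{i\in[0,N]: a_i$ appears exactly once in the sequence $a\}$ is nonempty. Then $\mathcal J=\{i_0<i_1<\dots<i_\mu\}$ with $\mu\in\mathbb N$, $\mu\equiv N\pmod2$, $i_s\equiv s\pmod 2$, and $i_{s+1}=i_s+2m_s+1$ with $m_s\in\mathbb N$ for $s\in[0,\mu-1]$. Let $\mathcal E$ be the set of $b=(b_0,\dots,b_N)\in\mathbb N^{N+1}$ with $b_0<b_2<b_4<\cdots$, $b_1<b_3<b_5<\cdots$ and such that the multisets $\{b_0,\dots,b_N\}$ and $\{a_0,\dots,a_N\}$ coincide. For $b\in\mathcal E$ let $\mathring b=(b_0,b_1,b_2+1,b_3+1,b_4+2,b_5+2,\dots)$, i.e. $\mathring b_i=b_i+\lfloor i/2\rfloor$. For $X\subset[0,\mu-1]\cap2\mathbb N$ define $a^X\in\mathcal E$ by: for $s\in X$, $(a^X_{i_s},a^X_{i_s+1},a^X_{i_s+2},a^X_{i_s+3},\dots,a^X_{i_s+2m_s},a^X_{i_s+2m_s+1})=(a_{i_s+1},a_{i_s},a_{i_s+3},a_{i_s+2},\dots,a_{i_s+2m_s+1},a_{i_s+2m_s})$, and $a^X_i=a_i$ for all other $i\in[0,N]$. If $b\in\mathcal E$ is such that the multiset $\{\mathring b_0,\dots,\mathring b_N\}$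 equals the multiset $\{\mathring a_0,\dots,\mathring a_N\}$, then there exists $X\subset[0,\mu-1]\cap2\mathbb N$ with $b=a^X$. *)

(* Sequences a = (a_0,...,a_N) are represented as
   [a : seq nat] with [size a = N.+1]; a_i is [nth 0 a i]. *)
From mathcomp Require Import all_boot.
Set Implicit Arguments. Unset Strict Implicit. Unset Printing Implicit Defensive.

Definition parity_incr (a : seq nat) : Prop :=
  forall i, i.+2 < size a -> nth 0 a i < nth 0 a i.+2.

Definition Jset (a : seq nat) : seq nat :=
  [seq i <- iota 0 (size a) | count_mem (nth 0 a i) a == 1].

(* i_s and m_s := (i_{s+1} - i_s - 1)/2, so that i_{s+1} = i_s + 2 m_s + 1. *)
Definition idx (a : seq nat) (s : nat) : nat := nth 0 (Jset a) s.
Definition mm (a : seq nat) (s : nat) : nat := (idx a s.+1 - idx a s).-1./2.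

Definition ring_seq (b : seq nat) : seq nat :=
  [seq nth 0 b i + i./2 | i <- iota 0 (size b)].

Definition in_E (a b : seq nat) : Prop :=
  size b = size a /\ parity_incr b /\ perm_eq b a.

(* For s in X (with s < mu) and 0 <= k <= m_s, the entries at positions
   i_s + 2k and i_s + 2k + 1 are exchanged; all other entries unchanged. *)
Definition src_pos (a : seq nat) (X : seq nat) (i : nat) : nat :=
  match [seq s <- X | (s.+1 < size (Jset a)) &&
                       (idx a s <= i <= idx a s + (mm a s).*2.+1)] with
  | s :: _ => if odd (i - idx a s) then i.-1 else i.+1
  | [::] => i
  end.

Definition aX (a : seq nat) (X : seq nat) : seq nat :=
  mkseq (fun i => nth 0 a (src_pos a X i)) (size a).

From mathcomp Require Import all_boot zify.

Set Implicit Arguments.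
Unset Strict Implicit.
Unset Printing Implicit Defensive.

(* Under the hypotheses on a every value occurs at most twice, and equal
   entries are adjacent. So the positions below a cut that does not split an
   equal pair consist of singletons and complete pairs; this parity count
   gives the statements about the singleton indices i_s. For b in E whose
   ring multiset is that of a, comparing minima shows inductively that every
   pair (b_{2k}, b_{2k+1}) is (a_{2k}, a_{2k+1}) or its swap. A swap at pair k forces
   a swap at pair k+1 unless a_{2k+1} is a singleton, and at pair k-1 unless
   a_{2k} is one; hence the swapped pairs fill whole blocks [i_s, i_{s+1}] with
   i_s even, and b = a^X for the set X of the indices s of these blocks. *)

Lemma iota0S n : iota 0 n.+1 = iota 0 n ++ [:: n].
Proof. by rewrite -addn1 iotaD. Qed.

Section FilterIota.
Variable P : pred nat.

Lemma count_iota0S p : count P (iota 0 p.+1) = count P (iota 0 p) + P p.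
Proof. by rewrite iota0S count_cat /= addn0. Qed.

Lemma count_iota0_mono p q : p <= q -> count P (iota 0 p) <= count P (iota 0 q).
Proof. by move=> le_pq; rewrite -(subnKC le_pq) iotaD count_cat leq_addr. Qed.

Lemma nth_filter_iota0 n s : s < size [seq i <- iota 0 n | P i] ->
  let i := nth 0 [seq i <- iota 0 n | P i] s in
  [/\ i < n, P i & count P (iota 0 i) = s].
Proof.
elim: n => [|n IH] //; rewrite iota0S filter_cat size_cat nth_cat.
case: ifP => [lt_s|ge_s] lt_s'; first by have [? ? ?] := IH lt_s; split => //; lia.
move: lt_s'; rewrite /=; case Pn: (P n) => /= lt_s'; last by rewrite addn0 ge_s in lt_s'.
have -> : s = size [seq i <- iota 0 n | P i] by move/negbT: ge_s; rewrite -leqNgt; lia.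
by rewrite subnn /= Pn size_filter.
Qed.

Lemma nth_filter_iota0_ltE n s p : s < size [seq i <- iota 0 n | P i] ->
  (nth 0 [seq i <- iota 0 n | P i] s < p) = (s < count P (iota 0 p)).
Proof.
move=> /nth_filter_iota0 [_ Pi count_i]; set i := nth 0 _ s in Pi count_i *.
case: ltnP => [lt_ip|le_pi].
  by have := count_iota0_mono lt_ip; rewrite count_iota0S count_i Pi addn1.
by have := count_iota0_mono le_pi; rewrite count_i leqNgt => /negbTE.
Qed.

End FilterIota.

Lemma count_mem_nth_iota (a : seq nat) v :
  count_mem v a = count (fun i => nth 0 a i == v) (iota 0 (size a)).
Proof. by rewrite -{1}(mkseq_nth 0 a) /mkseq count_map. Qed.

Lemma count_iota_eq0 (P : pred nat) m k :
  {in [pred i | m <= i < m + k], forall i, ~~ P i} -> count P (iota m k) = 0.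
Proof.
move=> nP; apply/eqP; rewrite -leqn0 leqNgt -has_count; apply/hasPn => i.
by rewrite mem_iota; apply: nP.
Qed.

(* For p >= size a, [single a p] is a junk value about the default entry 0. *)
Definition single (a : seq nat) (p : nat) : bool := count_mem (nth 0 a p) a == 1.

Definition nsingle (a : seq nat) (p : nat) : nat := count (single a) (iota 0 p).

Definition cuts_pair (a : seq nat) (p : nat) : bool :=
  (0 < p < size a) && (nth 0 a p.-1 == nth 0 a p).

Lemma nsingleS a p : nsingle a p.+1 = nsingle a p + single a p.
Proof. exact: count_iota0S. Qed.

Lemma nsingle_mono a p q : p <= q -> nsingle a p <= nsingle a q.
Proof. exact: count_iota0_mono. Qed.

Section SortedParity.
Variable a : seq nat.
Hypothesis sorted_a : sorted leq a.
Hypothesis incr_a : parity_incr a.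
Local Notation A := (nth 0 a).

Lemma nth_ltn_gap i j : i.+2 <= j -> j < size a -> A i < A j.
Proof.
move=> le_ij lt_j; apply: (leq_trans (@incr_a i _)); first lia.
by apply: (sorted_leq_nth leq_trans leqnn) => //; rewrite inE; lia.
Qed.

Lemma count_eq_before p : p < size a ->
  count (fun i => A i == A p) (iota 0 p) = cuts_pair a p.
Proof.
case: p => [|p] lt_p //; rewrite iota0S count_cat /=.
rewrite count_iota_eq0 /cuts_pair ?lt_p ?addn0 //= => i; rewrite inE => lt_ip.
by rewrite neq_ltn nth_ltn_gap.
Qed.

Lemma count_eq_after p : p < size a ->
  count (fun i => A i == A p) (iota p.+1 (size a - p.+1)) = cuts_pair a p.+1.
Proof.
move=> lt_p; rewrite /cuts_pair /= eq_sym.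
case: ltnP => [lt_p1|le_sp]; last by rewrite (_ : size a - p.+1 = 0) //; lia.
rewrite (_ : size a - p.+1 = 1 + (size a - p.+2)); last lia.
rewrite iotaD count_cat /= addn0 count_iota_eq0 ?addn0 // => i; rewrite inE => /andP[le_i lt_i].
by rewrite neq_ltn orbC nth_ltn_gap //; lia.
Qed.

Lemma count_mem_nth p : p < size a ->
  count_mem (A p) a = cuts_pair a p + 1 + cuts_pair a p.+1.
Proof.
move=> lt_p; rewrite count_mem_nth_iota.
rewrite -{1}(subnKC (ltnW lt_p)) iotaD add0n -subnSK //=.
by rewrite count_cat /= eqxx count_eq_before // count_eq_after // addnA.
Qed.

Lemma singleE p : p < size a -> single a p = ~~ cuts_pair a p && ~~ cuts_pair a p.+1.
Proof. by move=> lt_p; rewrite /single count_mem_nth //; do 2!case: (cuts_pair _ _). Qed.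

Lemma cuts_pair_consecutive p : ~~ (cuts_pair a p && cuts_pair a p.+1).
Proof.
apply/negP; rewrite /cuts_pair => /andP[/andP[/andP[p0 _] /eqP e1] /andP[/andP[_ lt_p1] /eqP e2]].
suff: A p.-1 < A p.+1 by rewrite e1 e2 ltnn.
by apply: nth_ltn_gap; lia.
Qed.

(* Below a cut that does not split an equal pair, the non-singletons pair up. *)
Lemma odd_nsingle p : p <= size a -> odd (nsingle a p + p) = cuts_pair a p.
Proof.
elim: p => [|p IH] le_p //; rewrite nsingleS addnS -addnA addnCA oddS oddD.
rewrite IH ?singleE; last lia; last lia.
by have := cuts_pair_consecutive p; do 2!case: (cuts_pair _ _).
Qed.
End SortedParity.

Section SingletonIndices.
Variable a : seq nat.

Lemma idx_props s : s < size (Jset a) ->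
  [/\ idx a s < size a, single a (idx a s) & nsingle a (idx a s) = s].
Proof. exact: nth_filter_iota0. Qed.

Lemma idx_ltE s p : s < size (Jset a) -> (idx a s < p) = (s < nsingle a p).
Proof. exact: nth_filter_iota0_ltE. Qed.

Lemma size_Jset : size (Jset a) = nsingle a (size a).
Proof. exact: size_filter. Qed.

Lemma idx_ltn s t : s < t -> t < size (Jset a) -> idx a s < idx a t.
Proof.
move=> lt_st lt_t; rewrite idx_ltE; last exact: ltn_trans lt_t.
by have [_ _ ->] := idx_props lt_t.
Qed.

Lemma not_single_between s r : s.+1 < size (Jset a) ->
  idx a s < r < idx a s.+1 -> ~~ single a r.
Proof.
move=> lt_s /andP[lt_sr lt_rs]; apply/negP => single_r.
move: lt_rs; rewrite ltnNge -ltnS idx_ltE // /nsingle count_iota0S single_r.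
by move: lt_sr; rewrite idx_ltE; [rewrite /nsingle; lia | exact: ltnW].
Qed.

End SingletonIndices.

Section SingletonParity.
Variable a : seq nat.
Hypotheses (sorted_a : sorted leq a) (incr_a : parity_incr a).

Lemma odd_idx s : s < size (Jset a) -> odd (idx a s) = odd s.
Proof.
move=> lt_s; have [lt_i single_i count_i] := idx_props lt_s.
have := odd_nsingle sorted_a incr_a (ltnW lt_i).
rewrite count_i; move: single_i; rewrite singleE // => /andP[/negbTE -> _].
by rewrite oddD => /negbT; rewrite negb_add => /eqP.
Qed.

Lemma idx_succ s : s.+1 < size (Jset a) -> idx a s.+1 = idx a s + (mm a s).*2.+1.
Proof.
move=> lt_s; have := idx_ltn (ltnSn s) lt_s.
have := odd_idx lt_s; have := odd_idx (ltnW lt_s); rewrite /mm /=; lia.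
Qed.

Lemma odd_size_Jset : odd (size (Jset a)) = odd (size a).
Proof.
have := odd_nsingle sorted_a incr_a (leqnn (size a)).
by rewrite /cuts_pair ltnn andbF -size_Jset oddD => /negbT; rewrite negb_add => /eqP.
Qed.

End SingletonParity.

Lemma ring_seq_cons2 x y l :
  ring_seq [:: x, y & l] = [:: x, y & map succn (ring_seq l)].
Proof.
rewrite /ring_seq /= !addn0 -[2]addn0 iotaDl -!map_comp; congr [:: _, _ & _].
by apply: eq_map => i /=; rewrite add0n addnS.
Qed.

Lemma parity_incr_behead2 x y l : parity_incr [:: x, y & l] -> parity_incr l.
Proof. by move=> incr i lt_i; apply: (@incr i.+2) => /=; lia. Qed.

Lemma perm_eq_behead2 x y u w (s t : seq nat) :
  (x = u /\ y = w) \/ (x = w /\ y = u) ->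
  perm_eq [:: x, y & s] [:: u, w & t] -> perm_eq s t.
Proof.
case=> [[-> ->]|[-> ->]]; first by rewrite !perm_cons.
by rewrite -[[:: w, u & s]]/([:: w] ++ [:: u] ++ s) perm_catCA !perm_cons.
Qed.

Lemma perm_ring_head2 u w a x y b :
  sorted leq [:: u, w & a] -> parity_incr [:: x, y & b] ->
  perm_eq [:: x, y & b] [:: u, w & a] ->
  perm_eq (ring_seq [:: x, y & b]) (ring_seq [:: u, w & a]) ->
  (x = u /\ y = w) \/ (x = w /\ y = u).
Proof.
(* u is the least entry and every entry of b exceeds some entry of the list,
   so u is x or y; w lies in the ring list, whose entries after the first two
   are b_j + j/2 + 1 > w, so w is x or y too. *)
move=> sorted_a incr_b perm_b perm_ring.
have le_uw : u <= w by case/andP: sorted_a.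
have mem_a v : v \in [:: u, w & a] -> v = u \/ w <= v.
  rewrite !inE => /orP[/eqP->|/orP[/eqP->|v_a]]; [by left | by right |right].
  by case/andP: sorted_a => _ /(order_path_min leq_trans)/allP; apply.
have mem_b v : v \in [:: x, y & b] -> v = u \/ w <= v.
  by rewrite (perm_mem perm_b); apply: mem_a.
have lt_u v : v \in b -> u < v.
  move=> v_b; have lt_j : index v b < size b by rewrite index_mem.
  have lt_v := @incr_b (index v b); rewrite /= nth_index // in lt_v.
  apply: (leq_ltn_trans _ (lt_v _)); last lia.
  have lt_j' : index v b < size [:: x, y & b] by rewrite /=; lia.
  by have [->|le_w] := mem_b _ (mem_nth 0 lt_j'); last exact: leq_trans le_uw le_w.
have u_b : u \notin b by apply/negP => /lt_u; rewrite ltnn.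
have [eq_uw|neq_uw] := eqVneq u w.
  have := permP perm_b (pred1 u); rewrite /= -eq_uw eqxx (count_memPn u_b).
  by case: eqP => [->|]; case: eqP => [->|] //; left.
have u_xy : (u == x) || (u == y).
  have : u \in [:: x, y & b] by rewrite (perm_mem perm_b) mem_head.
  by rewrite !inE (negbTE u_b) orbF.
have w_xy : (w == x) || (w == y).
  have : w \in ring_seq [:: x, y & b].
    by rewrite (perm_mem perm_ring) ring_seq_cons2 !inE eqxx orbT.
  rewrite ring_seq_cons2 !inE => /orP[->//|/orP[->|]]; first by rewrite orbT.
  case/mapP=> v /mapP[j]; rewrite mem_iota /= => lt_j -> eq_w.
  have v_b : nth 0 b j \in b by apply: mem_nth.
  have v_xyb : nth 0 b j \in [:: x, y & b] by rewrite !inE v_b !orbT.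
  have [eq_u|] := mem_b _ v_xyb; last lia.
  by have := lt_u _ v_b; rewrite eq_u ltnn.
by move: u_xy w_xy neq_uw => /orP[]/eqP<- /orP[]/eqP<-; rewrite ?eqxx //; [left|right].
Qed.

(* The second clause covers the unpaired last entry when size a is odd. *)
Definition pairwise_swap (a b : seq nat) : Prop :=
  (forall k, k.*2.+1 < size a ->
     (nth 0 b k.*2 = nth 0 a k.*2 /\ nth 0 b k.*2.+1 = nth 0 a k.*2.+1) \/
     (nth 0 b k.*2 = nth 0 a k.*2.+1 /\ nth 0 b k.*2.+1 = nth 0 a k.*2)) /\
  (forall k, k.*2.+1 = size a -> nth 0 b k.*2 = nth 0 a k.*2).

Lemma pairwise_swap_cons2 u w a x y b :
  (x = u /\ y = w) \/ (x = w /\ y = u) -> pairwise_swap a b ->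
  pairwise_swap [:: u, w & a] [:: x, y & b].
Proof.
move=> head [pairs last]; split=> [[|k]|[|k]] //= lt_k.
- by apply: pairs; rewrite doubleS in lt_k; lia.
- by apply: last; rewrite doubleS in lt_k; lia.
Qed.

Lemma pairwise_swap_perm_ring a b :
  sorted leq a -> parity_incr b -> perm_eq b a ->
  perm_eq (ring_seq b) (ring_seq a) -> pairwise_swap a b.
Proof.
move: {2}(size a) (leqnn (size a)) => n.
elim: n a b => [|n IH] [|u [|w a]] [|x [|y b]] // size_a sorted_a incr_b perm_b perm_ring;
  try by [split=> k | have := perm_size perm_b | move: size_a].
- have : x \in [:: u] by rewrite -(perm_mem perm_b) mem_head.
  by rewrite inE => /eqP ->; split=> [k|[]].
have head := perm_ring_head2 sorted_a incr_b perm_b perm_ring.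
apply: (pairwise_swap_cons2 head (IH a b _ _ _ _ _)).
- by move: size_a => /=; lia.
- by case/andP: sorted_a => _ /path_sorted.
- exact: parity_incr_behead2 incr_b.
- exact: perm_eq_behead2 head perm_b.
- move: perm_ring; rewrite !ring_seq_cons2 => /(perm_eq_behead2 head).
  exact/perm_map_inj/succn_inj.
Qed.

Definition swap_pos (i : nat) : nat := if odd i then i.-1 else i.+1.

Section SwappedPairs.
Variables a b : seq nat.
Hypotheses (sorted_a : sorted leq a) (incr_a : parity_incr a) (incr_b : parity_incr b).
Hypotheses (size_b : size b = size a) (swap_ab : pairwise_swap a b).
Local Notation A := (nth 0 a).
Local Notation B := (nth 0 b).

Definition swapped k := B k.*2 != A k.*2.

Lemma swappedP k : swapped k ->
  [/\ k.*2.+1 < size a, B k.*2 = A k.*2.+1, B k.*2.+1 = A k.*2 & A k.*2 != A k.*2.+1].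
Proof.
rewrite /swapped => neq_k; case: swap_ab => pairs last.
case: (ltnP k.*2.+1 (size a)) => [lt_k|le_k].
  case: (pairs k lt_k) => [[eq_k _]|[eq_k eq_k1]]; first by rewrite eq_k eqxx in neq_k.
  by split => //; rewrite -eq_k eq_sym.
have [eq_size|lt_size] := eqVneq k.*2.+1 (size a); first by rewrite last ?eqxx in neq_k.
by rewrite !nth_default ?eqxx in neq_k; lia.
Qed.

Lemma unswappedP k : ~~ swapped k -> k.*2.+1 < size a -> B k.*2.+1 = A k.*2.+1.
Proof.
rewrite /swapped negbK => /eqP eq_k lt_k.
by case: swap_ab => pairs _; case: (pairs k lt_k) => [[]|[eq_k' ->]] //; rewrite -eq_k eq_k'.
Qed.

Lemma swapped_succ k : swapped k -> ~~ single a k.*2.+1 -> swapped k.+1.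
Proof.
move=> sw_k; have [lt_k eq_b _ neq_a] := swappedP sw_k.
rewrite (singleE sorted_a incr_a) // /cuts_pair /= (negbTE neq_a) andbF /= negbK.
case/andP=> [lt_k1 /eqP eq_a]; rewrite /swapped doubleS -eq_a -eq_b.
by rewrite neq_ltn (@incr_b k.*2) ?orbT ?size_b.
Qed.

Lemma swapped_pred k : swapped k.+1 -> ~~ single a k.+1.*2 -> swapped k.
Proof.
move=> sw_k; have [lt_k _ eq_b neq_a] := swappedP sw_k; move: lt_k neq_a eq_b.
rewrite doubleS => lt_k neq_a eq_b.
rewrite (singleE sorted_a incr_a); last lia.
rewrite /cuts_pair /= (negbTE neq_a) andbF andbT negbK => /andP[_ /eqP eq_a].
apply: contraT => /unswappedP eq_k1; have := @incr_b k.*2.+1.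
by rewrite eq_k1 ?eq_b ?size_b -?eq_a ?ltnn //; lia.
Qed.

Lemma swapped_gap k l : k <= l ->
  {in [pred r | k.*2 < r <= l.*2], forall r, ~~ single a r} -> swapped k = swapped l.
Proof.
move=> le_kl; rewrite -(subnKC le_kl); elim: (l - k) => [|d IH] gap; first by rewrite addn0.
have not_single r : k.*2 < r <= (k + d.+1).*2 -> ~~ single a r by move=> ?; exact: gap.
rewrite IH => [|r /andP[? ?]]; last by apply: not_single; lia.
rewrite addnS; apply/idP/idP=> [sw|]; first by apply: swapped_succ sw _; apply: not_single; lia.
by move/swapped_pred; apply; apply: not_single; lia.
Qed.

(* A swap cannot propagate past the end of a, so a singleton follows it. *)
Lemma nsingle_swapped_lt k : swapped k -> nsingle a k.*2.+1 < nsingle a (size a).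
Proof.
move: {2}(size a - k.*2) (leqnn (size a - k.*2)) => n.
elim: n k => [|n IH] k le_n sw_k; have [lt_k _ _ _] := swappedP sw_k; first lia.
case single_k: (single a k.*2.+1).
  apply: (@leq_trans (nsingle a k.*2.+2)); last exact: nsingle_mono.
  by rewrite [nsingle a k.*2.+2]nsingleS single_k addn1.
apply: leq_ltn_trans (IH k.+1 _ (swapped_succ sw_k (negbT single_k))); last by rewrite doubleS; lia.
by apply: nsingle_mono; lia.
Qed.

Definition swapped_blocks : seq nat :=
  [seq s <- iota 0 (size (Jset a)).-1 | ~~ odd s && swapped (idx a s)./2].

Lemma mem_swapped_blocks s :
  s \in swapped_blocks = [&& s.+1 < size (Jset a), ~~ odd s & swapped (idx a s)./2].
Proof. by rewrite mem_filter mem_iota andbC; case: (size _) => //= n; rewrite ltnS. Qed.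

Lemma swapped_in_block s i : s \in swapped_blocks ->
  idx a s <= i <= idx a s + (mm a s).*2.+1 -> swapped i./2.
Proof.
rewrite mem_swapped_blocks => /and3P[lt_s even_s sw_s] /andP[le_i le_i'].
have := idx_succ sorted_a incr_a lt_s; have := odd_idx sorted_a incr_a (ltnW lt_s).
rewrite (negbTE even_s) => even_i eq_next.
rewrite -(swapped_gap (k := (idx a s)./2)) //; first by lia.
move=> r /andP[lt_r le_r]; apply: (not_single_between lt_s); lia.
Qed.

Lemma swapped_block k : swapped k ->
  exists2 s, s \in swapped_blocks & idx a s <= k.*2 /\ k.*2.+1 <= idx a s + (mm a s).*2.+1.
Proof.
move=> sw_k; have [lt_k _ _ neq_a] := swappedP sw_k.
have odd_t : odd (nsingle a k.*2.+1).
  have := odd_nsingle sorted_a incr_a (ltnW lt_k).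
  by rewrite /cuts_pair /= (negbTE neq_a) andbF addnS /= oddD odd_double addbF => /negbFE.
have lt_t : nsingle a k.*2.+1 < size (Jset a) by rewrite size_Jset nsingle_swapped_lt.
set s := (nsingle a k.*2.+1).-1.
have eq_t : nsingle a k.*2.+1 = s.+1 by rewrite /s; move: odd_t; case: (nsingle _ _).
rewrite eq_t in lt_t odd_t.
have le_s : idx a s <= k.*2 by rewrite -ltnS idx_ltE ?eq_t //; exact: ltnW.
have ge_s : k.*2.+1 <= idx a s.+1 by rewrite leqNgt idx_ltE // eq_t ltnn.
rewrite idx_succ // in ge_s; rewrite /= in odd_t.
have even_i : odd (idx a s) = false by rewrite odd_idx ?(negbTE odd_t) //; exact: ltnW.
exists s => //; rewrite mem_swapped_blocks lt_t odd_t (swapped_gap (l := k)) //=; first lia.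
move=> r /andP[lt_r le_r]; apply: (not_single_between lt_t).
by rewrite idx_succ //; lia.
Qed.

Lemma src_pos_swapped_blocks i :
  src_pos a swapped_blocks i = if swapped i./2 then swap_pos i else i.
Proof.
rewrite /src_pos; case E: [seq s <- swapped_blocks | _] => [|s l].
  case: ifP => // sw_i; have [s s_X [le_s ge_s]] := swapped_block sw_i.
  have : s \in [seq s <- swapped_blocks | (s.+1 < size (Jset a)) &&
      (idx a s <= i <= idx a s + (mm a s).*2.+1)].
    rewrite mem_filter s_X andbT; move: s_X; rewrite mem_swapped_blocks => /andP[-> _].
    by apply/andP; split; lia.
  by rewrite E.
have : s \in s :: l by rewrite mem_head.
rewrite -E mem_filter => /andP[/andP[_ in_block] s_X].
rewrite (swapped_in_block s_X in_block) /swap_pos; case/andP: in_block => le_i _.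
move: s_X; rewrite mem_swapped_blocks => /and3P[lt_s even_s _].
by rewrite oddB // odd_idx ?(negbTE even_s) ?addbF //; exact: ltnW.
Qed.

Lemma nth_swapped i : i < size a -> B i = A (if swapped i./2 then swap_pos i else i).
Proof.
move=> lt_i; rewrite /swap_pos.
have [k [-> | eq_i]] : exists k, i = k.*2 \/ i = k.*2.+1 by exists i./2; lia.
  rewrite doubleK odd_double; case: ifP => [/swappedP[] //|].
  by rewrite /swapped => /negbT/negbNE/eqP.
rewrite eq_i (_ : (k.*2.+1)./2 = k) /= ?odd_double /=; last lia.
case: ifP => [/swappedP[] //|/negbT/unswappedP]; apply; lia.
Qed.

Lemma aX_swapped_blocks : b = aX a swapped_blocks.
Proof.
apply: (eq_from_nth (x0 := 0)); first by rewrite size_mkseq.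
move=> i; rewrite size_b => lt_i.
by rewrite nth_mkseq // src_pos_swapped_blocks nth_swapped.
Qed.

End SwappedPairs.

Theorem lemma2p2 (N : nat) (a : seq nat) :
  size a = N.+1 ->
  sorted leq a ->
  parity_incr a ->
  Jset a != [::] ->
  let mu := (size (Jset a)).-1 in
  [/\ odd mu = odd N,
      (forall s, s <= mu -> odd (idx a s) = odd s),
      (forall s, s < mu -> idx a s.+1 = idx a s + (mm a s).*2.+1) &
      (forall b : seq nat, in_E a b ->
         perm_eq (ring_seq b) (ring_seq a) ->
         exists X : seq nat,
           all (fun s => (s < mu) && ~~ odd s) X /\ b = aX a X)].
Proof.
move=> size_a sorted_a incr_a J_nonempty mu.
have J_pos : 0 < size (Jset a) by case: (Jset a) J_nonempty.
split.
- by have := odd_size_Jset sorted_a incr_a; rewrite size_a /mu; lia.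
- by move=> s le_s; apply: odd_idx => //; lia.
- by move=> s lt_s; apply: idx_succ => //; lia.
move=> b [size_b [incr_b perm_b]] perm_ring.
have swap_ab := pairwise_swap_perm_ring sorted_a incr_b perm_b perm_ring.
exists (swapped_blocks a b); split; last exact: aX_swapped_blocks.
by apply/allP => s; rewrite mem_swapped_blocks /mu => /and3P[? -> _]; rewrite andbT; lia.
Qed.
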